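(* Let $S$ be an LAD-AG-groupoid. Then $S$ is self-dual, i.e. $a(bc)=c(ba)$ for all $a,b,c\in S$.
   Context: A groupoid is a set $S$ with a binary operation written as juxtaposition; $ab\cdot c$ means $(ab)c$ and $a\cdot bc$ means $a(bc)$. An AG-groupoid is a groupoid satisfying the left invertive law $(ab)c=(cb)a$ for all $a,b,c\in S$. An LAD-AG-groupoid (left abelian distributive AG-groupoid) is an AG-groupoid satisfying $a(bc)=(ab)(ca)$ for all $a,b,c\in S$. *)

Definition left_invertive {S : Type} (op : S -> S -> S) : Prop :=
  forall a b c : S, op (op a b) c = op (op c b) a.

Definition LAD_AG_groupoid {S : Type} (op : S -> S -> S) : Prop :=
  left_invertive op /\
  (forall a b c : S, op a (op b c) = op (op a b) (op c a)).

Definition self_dual {S : Type} (op : S -> S -> S) : Prop :=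
  forall a b c : S, op a (op b c) = op c (op b a).

(* Write P(x,y,z,w) := (xy)(zw).  From the two axioms one gets, successively: the medial law,
   x(yz) = x(zy), and (xy)w = (yx)w whenever w is a product.  Hence P is a fully symmetric
   function of its four arguments, and every product x(yz) equals P(x,x,y,z).  The self-duality
   a(bc) = c(ba) thus amounts to P(a,a,b,c) = P(c,c,a,b), i.e. to moving the repeated argument,
   which is the identity (xy)(zz) = (zy)(xx) obtained by left distributivity. *)


Section AG_groupoid.

Context {S : Type} {op : S -> S -> S}.
Local Notation "x * y" := (op x y).
Hypothesis invertive : left_invertive op.

Lemma medial (a b c d : S) : (a * b) * (c * d) = (a * c) * (b * d).
Proof.
  rewrite (invertive a b (c * d)), (invertive c d b).
  apply invertive.
Qed.

End AG_groupoid.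

Section LAD_AG_groupoid.

Context {S : Type} {op : S -> S -> S}.
Local Notation "x * y" := (op x y).
Hypothesis invertive : left_invertive op.
Hypothesis lad : forall a b c : S, a * (b * c) = (a * b) * (c * a).

Lemma lad_swap (a b c : S) : a * (b * c) = a * (c * b).
Proof.
  rewrite (lad a b c), (medial invertive).
  symmetry; apply lad.
Qed.

Lemma lad_left_distr (a b c : S) : a * (b * c) = (a * b) * (a * c).
Proof. rewrite (lad a b c); apply lad_swap. Qed.

Lemma lad_square_left (a b c : S) : a * (b * c) = (a * a) * (b * c).
Proof. rewrite (lad_left_distr a b c); apply (medial invertive). Qed.

Lemma lad_left_factor_flip (x y z : S) : (x * y) * (z * x) = (y * x) * (z * x).
Proof.
  rewrite (lad (x * y) z x), (invertive (x * y) z), (lad_swap x x y).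
  rewrite (lad_swap (x * (y * x) * z) x y), (invertive (x * (y * x)) z).
  symmetry; apply lad.
Qed.

Lemma lad_left_factor_comm (x y u v : S) : (x * y) * (u * v) = (y * x) * (u * v).
Proof.
  assert (square_comm : (x * y) * (x * y) = (y * x) * (y * x)).
  { rewrite (lad_swap (x * y) x y); apply lad_left_factor_flip. }
  rewrite (lad_square_left (x * y)), square_comm.
  symmetry; apply lad_square_left.
Qed.

Lemma lad_prod_comm (p q r s : S) : (p * q) * (r * s) = (r * s) * (p * q).
Proof.
  rewrite (medial invertive p), (lad_left_factor_comm p r), (medial invertive r p).
  rewrite (lad_swap (r * q) p s), (medial invertive r q).
  apply lad_swap.
Qed.

Lemma lad_square_swap (x y z : S) : (x * y) * (z * z) = (z * y) * (x * x).
Proof.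
  rewrite (lad_left_distr (x * y) z z), (invertive x y z).
  symmetry; apply lad_left_distr.
Qed.

End LAD_AG_groupoid.

Theorem mainTheorem2 (S : Type) (op : S -> S -> S) (H : LAD_AG_groupoid op) :
  self_dual op.
Proof.
  destruct H as [invertive lad].
  intros a b c.
  rewrite (lad_square_left invertive lad a b c), (lad_prod_comm invertive lad a a).
  rewrite (lad_left_factor_comm invertive lad b c), (lad_square_swap invertive lad c b a).
  rewrite (lad_prod_comm invertive lad a b), (lad_swap invertive lad (op c c) a b).
  symmetry; apply (lad_square_left invertive lad).
Qed.
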